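(* Define $U_0=\{x\mapsto ax+b : a\in\mathbb{R}_+,\ b\in\mathbb{R}\}$, $U_{n+1}=\{x\mapsto a\,\mathrm{LReLU}_\beta(f(x))+b : a,\beta\in\mathbb{R}_+,\ b\in\mathbb{R},\ f\in U_n\}$ for $n\ge 0$, and $U=\bigcup_{n\ge0}U_n$ (functions $\mathbb{R}\to\mathbb{R}$). Then for every continuous non-decreasing function $\sigma:\mathbb{R}\to\mathbb{R}$, every compact $K\subset\mathbb{R}$ and every $\epsilon>0$, there exists $g\in U$ with $\sup_{x\in K}|\sigma(x)-g(x)|<\epsilon$.
   Context: $\mathbb{R}_+$ denotes the positive reals. For $\beta\in\mathbb{R}$, $\mathrm{LReLU}_\beta(x)=x$ if $x\ge 0$ and $\beta x$ if $x<0$. *)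

From HB Require Import structures.
From mathcomp Require Import all_boot all_order all_algebra.
From mathcomp Require Import all_classical all_reals all_analysis.
Set Implicit Arguments. Unset Strict Implicit. Unset Printing Implicit Defensive.
Import Order.TTheory GRing.Theory Num.Theory.
Import numFieldNormedType.Exports.
Local Open Scope ring_scope.
Local Open Scope classical_set_scope.

Definition LReLU (R : realType) (beta x : R) : R :=
  if 0 <= x then x else beta * x.

Inductive U_n (R : realType) : nat -> (R -> R) -> Prop :=
| U_n0 (a b : R) : 0 < a -> U_n 0 (fun x => a * x + b)
| U_nS (n : nat) (a beta b : R) (f : R -> R) :
    0 < a -> 0 < beta -> U_n n f ->
    U_n n.+1 (fun x => a * LReLU beta (f x) + b).

Definition U_all (R : realType) (g : R -> R) : Prop := exists n, U_n n g.

From HB Require Import structures.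
From mathcomp Require Import all_boot all_order all_algebra.
From mathcomp Require Import all_classical all_reals all_analysis.
From mathcomp Require Import ring lra.
Import Order.TTheory GRing.Theory Num.Theory.
Import numFieldNormedType.Exports.
Local Open Scope ring_scope.
Local Open Scope classical_set_scope.

(* Every function of U is non-decreasing, and U is closed under
   post-composition with increasing affine maps.  The approximant is built
   from left to right: on [m, x] we keep some g in U within 2 eta of sigma
   which, to the right of x, is a ramp c + s (y - x) of positive slope
   starting at a value c in (sigma x, sigma x + eta).  If sigma oscillates by
   less than eta/2 on [x, x'], one more leaky ReLU "bends" the ramp at x
   (unchanged to its left, with a new slope s' to its right) so that it
   reaches a suitable value at x', which extends the invariant to [m, x'].
   By continuity of sigma and a supremum argument (continuous induction) the
   invariant reaches any B >= m; taking [m, B] = [-B, B] containing the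
   compact K and eta = eps / 4 gives the theorem. *)

Section ClassU.
Variable R : realType.

Lemma LReLU_homo (beta : R) : 0 < beta -> {homo LReLU beta : x y / x <= y}.
Proof.
move=> hb x y hxy; rewrite /LReLU.
have [hx|hx] := leP 0 x; have [hy|hy] := leP 0 y => //; nra.
Qed.

Lemma U_n_homo {n} {f : R -> R} : U_n n f -> {homo f : x y / x <= y}.
Proof.
elim=> {n f} [a b ha|n a beta b f ha hb hf IH] x y hxy /=.
- by rewrite lerD2r ler_pM2l.
- by rewrite lerD2r ler_pM2l //; apply: LReLU_homo => //; apply: IH.
Qed.

(* Each U_n is closed under post-composition with y |-> a y + b, a > 0,
   since this map can be absorbed into the outermost affine layer. *)
Lemma U_n_affine n (f : R -> R) (a b : R) : 0 < a -> U_n n f ->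
  U_n n (fun x => a * f x + b).
Proof.
move=> ha [a' b' ha'|n' a' beta b' f' ha' hb hf].
- rewrite (_ : (fun x => _) = fun x => (a * a') * x + (a * b' + b)).
    by constructor; rewrite mulr_gt0.
  by apply: funext => x; ring.
- rewrite (_ : (fun x => _) =
               fun x => (a * a') * LReLU beta (f' x) + (a * b' + b)).
    by constructor; rewrite ?mulr_gt0.
  by apply: funext => x; ring.
Qed.

Definition ramp_from (g : R -> R) (x c s : R) : Prop :=
  forall y, x <= y -> g y = c + s * (y - x).

(* Bending g at the level c: below c the function is unchanged, above c its
   slope is multiplied by s' / s. *)
Definition bend (g : R -> R) (c s s' : R) (y : R) : R :=
  (s' / s) * LReLU (s / s') (g y - c) + c.

Lemma bend_U n (g : R -> R) (c s s' : R) : 0 < s -> 0 < s' -> U_n n g ->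
  U_n n.+1 (bend g c s s').
Proof.
move=> hs hs' hg; rewrite /bend.
have hgc : U_n n (fun y => g y - c).
  by rewrite (_ : (fun y => _) = fun y => 1 * g y + - c);
    [apply: U_n_affine | apply: funext => y; rewrite mul1r].
by constructor; rewrite ?divr_gt0.
Qed.

Section Bend.
Variables (n : nat) (g : R -> R) (x c s s' : R).
Hypotheses (hg : U_n n g) (hramp : ramp_from g x c s) (hs : 0 < s) (hs' : 0 < s').

(* Left of the bending point nothing changes, because there g <= g x = c. *)
Lemma bend_left y : y <= x -> bend g c s s' y = g y.
Proof.
move=> hyx; have hgx : g x = c by rewrite hramp // subrr mulr0 addr0.
have hgy : g y <= c by rewrite -hgx; apply: (U_n_homo hg).
rewrite /bend /LReLU; case: ifP => h0.
  by rewrite (_ : g y = c); [ring | lra].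
by field; rewrite !gt_eqF.
Qed.

Lemma bend_right y : x <= y -> bend g c s s' y = c + s' * (y - x).
Proof.
move=> hxy; rewrite /bend hramp // /LReLU.
rewrite (_ : c + s * (y - x) - c = s * (y - x)); last by ring.
rewrite mulr_ge0 ?subr_ge0 ?(ltW hs) //.
by field; rewrite gt_eqF.
Qed.

End Bend.
Arguments bend_left {n g x c s s'} hg hramp hs hs' {y}.
Arguments bend_right {g x c s} s' hramp hs {y}.

Section Approximation.
Variables (sigma : R -> R) (m eta : R).
Hypothesis hsigma : {homo sigma : x y / x <= y}.

Definition approx_upto (x : R) : Prop :=
  m <= x /\ exists (g : R -> R) (n : nat) (c s : R),
    [/\ U_n n g, 0 < s, sigma x < c < sigma x + eta, ramp_from g x c s &
        forall y, m <= y <= x -> `|sigma y - g y| <= 2 * eta].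

Lemma approx_upto_base : 0 < eta -> approx_upto m.
Proof.
move=> heta; split => //; exists (fun y => 1 * y + (sigma m + eta / 2 - m)), 0%N,
  (sigma m + eta / 2), 1; split => //.
- by constructor.
- by apply/andP; split; lra.
- by move=> y _; ring.
- move=> y /andP [h1 h2]; have -> : y = m by apply/eqP; rewrite eq_le h1 h2.
  rewrite (_ : _ - _ = - (eta / 2)); last by ring.
  by rewrite normrN ger0_norm; lra.
Qed.

Lemma approx_upto_extend {x x'} : 0 < eta -> approx_upto x -> x <= x' ->
  sigma x' - sigma x < eta / 2 -> approx_upto x'.
Proof.
move=> heta [hmx [g [n [c [s [hg hs /andP [hc1 hc2] hramp hbd]]]]]] hxx' hosc.
have [<-|hne] := eqVneq x x'; first by split => //; exists g, n, c, s; split; rewrite ?hc1.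
have hlt : x < x' by rewrite lt_neqAle hne.
have hsxx' : sigma x <= sigma x' by apply: hsigma.
pose c' := (c + sigma x' + eta) / 2.
pose s' := (c' - c) / (x' - x).
have hs' : 0 < s' by rewrite divr_gt0 // subr_gt0 /c'; lra.
have hs'd : s' * (x' - x) = c' - c.
  by rewrite mulrVK // unitfE subr_eq0 eq_sym.
split; first exact: le_trans hxx'.
exists (bend g c s s'), n.+1, c', s'; split.
- exact: bend_U.
- exact: hs'.
- by apply/andP; split; rewrite /c'; lra.
- move=> y hy; rewrite (bend_right s' hramp hs (le_trans hxx' hy)).
  have -> : c + s' * (y - x) = c + s' * (x' - x) + s' * (y - x') by ring.
  by rewrite hs'd; ring.
- move=> y /andP [hmy hyx']; have [hyx|hxy] := leP y x.
    by rewrite (bend_left hg hramp hs hs' hyx); apply: hbd; rewrite hmy.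
  rewrite (bend_right s' hramp hs (ltW hxy)).
  have h1 : sigma x <= sigma y by apply/hsigma/ltW.
  have h2 : sigma y <= sigma x' by apply: hsigma.
  have h3 : 0 <= s' * (y - x) by rewrite mulr_ge0 ?subr_ge0 ?ltW.
  have h4 : s' * (y - x) <= s' * (x' - x) by rewrite ler_pM2l // lerD2r.
  by rewrite ler_norml; apply/andP; split; rewrite /c' in hs'd; lra.
Qed.

Hypothesis hcont : continuous sigma.

(* Continuous induction: the invariant reaches every B >= m.  Let z be the
   supremum of the points of [m, B] where it holds; continuity at z lets one
   step of the construction jump from a point just left of z to a point
   beyond z (contradiction) or to B itself. *)
Lemma approx_upto_all B : 0 < eta -> m <= B -> approx_upto B.
Proof.
move=> heta hmB; set S := [set x | x <= B /\ approx_upto x].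
have hS : has_sup S.
  by split; [exists m; split => //; exact: approx_upto_base | exists B => x []].
set z := sup S.
have hzB : z <= B by apply: ge_sup; [exact: hS.1 | move=> x []].
have [d hd hosc] : exists2 d : R, 0 < d &
    forall y, `|z - y| < d -> `|sigma z - sigma y| < eta / 4.
  have /cvgrPdist_lt /(_ (eta / 4)) := hcont z.
  move=> /(_ (divr_gt0 heta (ltr0Sn _ _))) /nbhs_ballP [d hd hball].
  by exists d => // y hy; apply: hball; rewrite -ball_normE.
have [x Sx hzx] := sup_adherent hd hS.
have [_ hPx] : x <= B /\ approx_upto x := Sx.
have hxz : x <= z by apply: sup_upper_bound.
have hjump y : x <= y -> `|z - y| < d -> approx_upto y.
  move=> hxy hzy; apply: (approx_upto_extend heta hPx hxy).
  have hzx' : `|z - x| < d.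
    by rewrite ger0_norm ?subr_ge0 //; move: hzx; rewrite -/z; lra.
  have := hosc y hzy; have := hosc x hzx'.
  by rewrite !ltr_norml => /andP [? ?] /andP [? ?]; lra.
have [hBz|hBz] := leP B (z + d / 2).
  by apply: hjump; [lra | rewrite distrC ger0_norm; lra].
have hPy : approx_upto (z + d / 2).
  apply: hjump; first lra.
  by rewrite (_ : _ - _ = - (d / 2)) ?normrN ?ger0_norm; [lra | lra | ring].
have : z + d / 2 <= z by apply: sup_upper_bound => //; split => //; lra.
lra.
Qed.

End Approximation.

Lemma compact_in_interval (K : set R) : compact K ->
  exists2 B : R, 0 <= B & forall x, K x -> - B <= x <= B.
Proof.
move=> /compact_bounded [M [_ hM]]; exists (`|M| + 1).
  by rewrite addr_ge0.
move=> x Kx; rewrite -ler_norml; apply: hM => //.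
by rewrite (le_lt_trans (ler_norm M)) ?ltrDl.
Qed.

End ClassU.
Arguments approx_upto_all {R sigma m eta} hsigma hcont {B}.
Arguments compact_in_interval {R K}.

Theorem mainTheorem4 (R : realType) (sigma : R -> R) (K : set R) (eps : R) :
  continuous sigma ->
  {homo sigma : x y / x <= y} ->
  compact K ->
  0 < eps ->
  exists g : R -> R, U_all g /\
    exists M : R, M < eps /\ (forall x, K x -> `|sigma x - g x| <= M).
Proof.
move=> hc hs hK heps.
have [B hB0 hB] := compact_in_interval hK.
have heta : 0 < eps / 4 by rewrite divr_gt0.
have hmB : - B <= B by lra.
have [_ [g [n [_ [_ [hg _ _ _ hbd]]]]]] := approx_upto_all hs hc heta hmB.
exists g; split; first by exists n.
exists (2 * (eps / 4)); split; first lra.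
by move=> x Kx; apply/hbd/hB.
Qed.
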